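(* Let $X>0$, $n\ge 1$, and let $A_0,A_1:\mathbb{R}\to\mathbb{C}^{n\times n}$ be $X$-periodic with $A_0,A_1\in L^2_{\rm per}([0,X])$ (entrywise). For $\lambda\in\mathbb{C}$ define on $L^2_{\rm per}([0,X];\mathbb{C}^n)$ the operators $$K_1 U=\partial_x(\partial_x^2-1)^{-1}(A_1U),\qquad K_0U=(\partial_x^2-1)^{-1}\big((A_0+(1-\lambda)I)U\big),$$ initially on trigonometric polynomials. Then $K=K_1+K_0$ extends to a Hilbert–Schmidt operator on $L^2_{\rm per}([0,X];\mathbb{C}^n)$.
   Context: $L^2_{\rm per}([0,X];\mathbb{C}^n)$ denotes the Hilbert space of $X$-periodic $\mathbb{C}^n$-valued functions square-integrable on $[0,X]$. $(\partial_x^2-1)^{-1}$ and $\partial_x(\partial_x^2-1)^{-1}$ are the Fourier multipliers acting on the $k$-th Fourier mode $e^{2\pi i kx/X}$ by $(-(2\pi k/X)^2-1)^{-1}$ and $(2\pi i k/X)(-(2\pi k/X)^2-1)^{-1}$ respectively. An operator $A$ on a separable Hilbert space is Hilbert–Schmidt if $\sum_{j,k}|\langle Ae_j,e_k\rangle|^2<\infty$ for an orthonormal basis $\{e_j\}$. *)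

From HB Require Import structures.
From mathcomp Require Import all_boot all_order all_algebra.
From mathcomp Require Import all_classical all_reals all_analysis.
From mathcomp Require Import complex.
Set Implicit Arguments. Unset Strict Implicit. Unset Printing Implicit Defensive.
Import Order.TTheory GRing.Theory Num.Theory.
Local Open Scope classical_set_scope.
Local Open Scope ring_scope.
Local Open Scope complex_scope.

Section Defs.
Variable R : realType.
Local Notation C := (R[i]).

Definition csqnorm (z : C) : R := complex.Re z ^+ 2 + complex.Im z ^+ 2.

Definition cint (X : R) (f : R -> C) : C :=
  Complex (Rintegral lebesgue_measure `[0, X] (fun x => complex.Re (f x)))
          (Rintegral lebesgue_measure `[0, X] (fun x => complex.Im (f x))).

Definition expi (t : R) : C := Complex (cos t) (sin t).

Definition periodic (T : Type) (X : R) (f : R -> T) := forall x, f (x + X) = f x.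

Definition L2_on (X : R) (a : R -> C) :=
  measurable_fun `[0, X] (fun x => complex.Re (a x)) /\
  measurable_fun `[0, X] (fun x => complex.Im (a x)) /\
  (lebesgue_measure.-integrable `[0, X] (fun x => (csqnorm (a x))%:E)).

Definition L2per_mx (n : nat) (X : R) (A : R -> 'M[C]_n) :=
  periodic X A /\ forall i j, L2_on X (fun x => A x i j).

Definition cinner (n : nat) (X : R) (U V : R -> 'cV[C]_n) : C :=
  cint X (fun x => \sum_(l < n) U x l ord0 * conjc (V x l ord0)).

Definition fmode (n : nat) (X : R) (k : int) (i : 'I_n) : R -> 'cV[C]_n :=
  fun x => \col_(l < n)
    (if l == i then ((Num.sqrt X)^-1)%:C * expi (2 * pi * k%:~R * x / X) else 0).

Definition freq (X : R) (k : int) : R := 2 * pi * k%:~R / X.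

(* symbol of (d_x^2 - 1)^{-1} on mode k *)
Definition sym0 (X : R) (k : int) : C := ((- (freq X k) ^+ 2 - 1)^-1)%:C.
(* symbol of d_x (d_x^2 - 1)^{-1} on mode k *)
Definition sym1 (X : R) (k : int) : C :=
  Complex 0 (freq X k) * ((- (freq X k) ^+ 2 - 1)^-1)%:C.

(* The Fourier multiplier with symbol m is defined on L^2 by
   <M W, e_{k,l}> = m k * <W, e_{k,l}>.  Hence the (k,l)-th Fourier coefficient
   of K U = d_x (d_x^2-1)^{-1}(A1 U) + (d_x^2-1)^{-1}((A0 + (1-lam) I) U) is: *)
Definition Kcoef (n : nat) (X : R) (lam : C) (A0 A1 : R -> 'M[C]_n)
    (U : R -> 'cV[C]_n) (k : int) (l : 'I_n) : C :=
  sym1 X k * cinner X (fun x => A1 x *m U x) (fmode X k l)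
  + sym0 X k * cinner X (fun x => (A0 x + (1 - lam)%:M) *m U x) (fmode X k l).

(* Hilbert-Schmidt: sum over the orthonormal basis {e_j} of |<K e_j, e_m>|^2 < oo *)
Definition K_hilbert_schmidt (n : nat) (X : R) (lam : C) (A0 A1 : R -> 'M[C]_n) :=
  (\esum_(p in [set: ((int * 'I_n) * (int * 'I_n))%type])
     (csqnorm (Kcoef X lam A0 A1 (fmode X p.1.1 p.1.2) p.2.1 p.2.2))%:E < +oo)%E.

End Defs.

(* In the orthonormal Fourier basis e_(k,i) = X^(-1/2) e^(2 pi i k x / X) u_i, the entry
   <K e_(k,i), e_(m,l)> is X^-1 (s1(m) a(m - k) + s0(m) b(m - k)), where s1, s0 are the
   symbols of d_x (d_x^2 - 1)^-1 and (d_x^2 - 1)^-1 and a, b are the Fourier coefficients of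
   the (l, i) entries of A1 and of A0 + (1 - lam) I.  Both symbols have squared modulus at
   most w(m) = 1 / (1 + (2 pi m / X)^2), so every finite partial Hilbert-Schmidt sum is
   bounded by 2 X^-2 sum_m w(m) sum_k (|a(m - k)|^2 + |b(m - k)|^2).  By Bessel's
   inequality the sum over k is at most X times the squared L^2 norms of the entries,
   uniformly in m, and sum_m w(m) < oo since w(m) = O(m^-2). *)

From HB Require Import structures.
From mathcomp Require Import all_boot all_order all_algebra.
From mathcomp Require Import all_classical all_reals all_analysis.
From mathcomp Require Import complex.
From mathcomp Require Import ring lra.
Set Implicit Arguments. Unset Strict Implicit. Unset Printing Implicit Defensive.
Import Order.TTheory GRing.Theory Num.Theory.
Import numFieldNormedType.Exports.
Local Open Scope classical_set_scope.
Local Open Scope ring_scope.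

Section SquareIntegrable.
Context d (T : measurableType d) (R : realType) (mu : measure T R) (D : set T).
Hypotheses (mD : measurable D) (muD : (mu D < +oo)%E).

Definition sq_integrable (f : T -> R) :=
  measurable_fun D f /\ mu.-integrable D (fun x => (f x ^+ 2)%:E).

Lemma integrable_bounded_real (f : T -> R) (M : R) : measurable_fun D f ->
  (forall x, D x -> `|f x| <= M) -> mu.-integrable D (EFin \o f).
Proof.
move=> mf fM; apply: measurable_bounded_integrable => //.
rewrite /bounded_near; near=> M' => x Dx /=; apply: le_trans (fM x Dx) _.
by near: M'; exact: nbhs_pinfty_ge (num_real M).
Unshelve. all: end_near.
Qed.

Lemma integrableD_real (f g : T -> R) :
  mu.-integrable D (EFin \o f) -> mu.-integrable D (EFin \o g) ->
  mu.-integrable D (EFin \o (fun x => f x + g x)).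
Proof.
move=> If Ig; apply: (eq_integrable mD _ _ _ (integrableD mD If Ig)).
by move=> x _; rewrite /= ?EFinD.
Qed.

Lemma integrableB_real (f g : T -> R) :
  mu.-integrable D (EFin \o f) -> mu.-integrable D (EFin \o g) ->
  mu.-integrable D (EFin \o (fun x => f x - g x)).
Proof.
move=> If Ig; apply: (eq_integrable mD _ _ _ (integrableB mD If Ig)).
by move=> x _; rewrite /= ?EFinB.
Qed.

Lemma integrableZl_real (c : R) (f : T -> R) :
  mu.-integrable D (EFin \o f) -> mu.-integrable D (EFin \o (fun x => c * f x)).
Proof.
move=> If; apply: (eq_integrable mD _ _ _ (integrableZl mD c If)).
by move=> x _; rewrite /= ?EFinM.
Qed.

Lemma integrable_sum_real (I : Type) (s : seq I) (F : I -> T -> R) :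
  (forall i, mu.-integrable D (EFin \o F i)) ->
  mu.-integrable D (EFin \o (fun x => \sum_(i <- s) F i x)).
Proof.
move=> IF; apply: (eq_integrable mD _ _ _ (integrable_sum mD s (fun i _ => IF i))).
by move=> x _; rewrite /= sumEFin.
Qed.

Lemma Rintegral_sum (I : Type) (s : seq I) (F : I -> T -> R) :
  (forall i, mu.-integrable D (EFin \o F i)) ->
  \int[mu]_(x in D) (\sum_(i <- s) F i x) = \sum_(i <- s) \int[mu]_(x in D) F i x.
Proof.
move=> IF; elim: s => [|i s IHs].
  by under eq_Rintegral do rewrite big_nil; rewrite Rintegral_cst // mul0r big_nil.
under eq_Rintegral do rewrite big_cons.
by rewrite RintegralD ?IHs ?big_cons //; exact: integrable_sum_real.
Qed.

Lemma sq_integrable_mul_integrable (f g : T -> R) :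
  sq_integrable f -> sq_integrable g -> mu.-integrable D (EFin \o (fun x => f x * g x)).
Proof.
move=> [mf If] [mg Ig]; apply: le_integrable (integrableD_real If Ig) => //.
  exact/measurable_realfun.measurable_EFinP/measurable_realfun.measurable_funM.
move=> x _ /=; rewrite lee_fin [leRHS]ger0_norm ?addr_ge0 ?sqr_ge0 // normrM.
rewrite -[f x ^+ 2]real_normK ?num_real // -[g x ^+ 2]real_normK ?num_real //.
have := sqr_ge0 (`|f x| - `|g x|); have := mulr_ge0 (normr_ge0 (f x)) (normr_ge0 (g x)).
move: `|f x| `|g x| => u v; rewrite sqrrB -mulr_natr; lra.
Qed.

Lemma sq_integrable_bounded (f : T -> R) (M : R) : measurable_fun D f ->
  (forall x, D x -> `|f x| <= M) -> sq_integrable f.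
Proof.
move=> mf fM; split => //; apply: (@integrable_bounded_real _ (M ^+ 2)).
  exact: measurable_realfun.measurable_funM.
move=> x Dx; rewrite normrX lerXn2r ?nnegrE ?fM //.
exact: le_trans (fM x Dx).
Qed.

Lemma sq_integrable_cst (k : R) : sq_integrable (fun=> k).
Proof. by apply: (@sq_integrable_bounded _ `|k|). Qed.

Lemma sq_integrable_integrable (f : T -> R) :
  sq_integrable f -> mu.-integrable D (EFin \o f).
Proof.
move=> Lf; apply: (eq_integrable mD _ _ _ (sq_integrable_mul_integrable Lf (sq_integrable_cst 1))).
by move=> x _; rewrite /= mulr1.
Qed.

Lemma sq_integrableD (f g : T -> R) :
  sq_integrable f -> sq_integrable g -> sq_integrable (fun x => f x + g x).
Proof.
move=> Lf Lg; split; first exact: measurable_realfun.measurable_funD Lf.1 Lg.1.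
have Ifg := integrableZl_real 2 (sq_integrable_mul_integrable Lf Lg).
apply: (eq_integrable mD _ _ _ (integrableD_real (integrableD_real Lf.2 Lg.2) Ifg)).
by move=> x _ /=; congr (_%:E); ring.
Qed.

Lemma sq_integrableZl (c : R) (f : T -> R) :
  sq_integrable f -> sq_integrable (fun x => c * f x).
Proof.
move=> Lf; split; first exact: measurable_realfun.measurable_funM (measurable_cst c) Lf.1.
apply: (eq_integrable mD _ _ _ (integrableZl_real (c ^+ 2) Lf.2)).
by move=> x _ /=; congr (_%:E); ring.
Qed.

Lemma sq_integrable_sum (I : Type) (s : seq I) (F : I -> T -> R) :
  (forall i, sq_integrable (F i)) -> sq_integrable (fun x => \sum_(i <- s) F i x).
Proof.
move=> LF; elim: s => [|i s IHs].
  by under eq_fun do rewrite big_nil; exact: sq_integrable_cst.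
by under eq_fun do rewrite big_cons; exact: sq_integrableD.
Qed.

End SquareIntegrable.

Section Trigonometry.
Context {R : realType}.

Lemma sin_cos_2pi_int (k : int) :
  sin (2 * pi * k%:~R) = 0 :> R /\ cos (2 * pi * k%:~R) = 1 :> R.
Proof.
have sin_cos_2pi_nat (m : nat) : sin (2 * pi * m%:R) = 0 :> R /\ cos (2 * pi * m%:R) = 1 :> R.
  have -> : 2 * pi * m%:R = 0 + pi *+ 2 *+ m :> R by rewrite add0r -mulrnA mulr_natr; ring.
  by rewrite (periodicn (@sinD2pi R)) (periodicn (@cosD2pi R)) sin0 cos0.
case: k => m; first exact: sin_cos_2pi_nat.
rewrite NegzE rmorphN /= mulrN sinN cosN.
by have [-> ->] := sin_cos_2pi_nat m.+1; rewrite oppr0.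
Qed.

Lemma is_derive_sinM (t x : R) :
  is_derive x 1 (fun y => sin (t * y)) (cos (t * x) * t).
Proof.
have h1 : is_derive x 1 (t *: (@id R)) (t *: 1) by exact: is_deriveZ.
have := is_derive1_comp (is_derive_sin (t * x)) h1.
by have -> : t%:A = t :> R by rewrite /GRing.scale /= mulr1.
Qed.

Lemma is_derive_cosM (t x : R) :
  is_derive x 1 (fun y => cos (t * y)) (- sin (t * x) * t).
Proof.
have h1 : is_derive x 1 (t *: (@id R)) (t *: 1) by exact: is_deriveZ.
have := is_derive1_comp (is_derive_cos (t * x)) h1.
by have -> : t%:A = t :> R by rewrite /GRing.scale /= mulr1.
Qed.

Lemma is_derive_continuous (f df : R -> R) :
  (forall x : R, is_derive x (1 : R) f (df x)) -> continuous f.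
Proof.
move=> f_df x; apply: differentiable_continuous; apply/derivable1_diffP.
exact: ex_derive.
Qed.

End Trigonometry.

Section ComplexSqnorm.
Variable R : realType.
Local Open Scope complex_scope.

Lemma csqnorm_ge0 (z : R[i]) : 0 <= csqnorm z.
Proof. by rewrite /csqnorm addr_ge0 ?sqr_ge0. Qed.

Lemma csqnormM (z w : R[i]) : csqnorm (z * w) = csqnorm z * csqnorm w.
Proof. by case: z w => [a b] [c e]; rewrite /csqnorm /=; ring. Qed.

Lemma csqnormD_le (z w : R[i]) : csqnorm (z + w) <= 2 * (csqnorm z + csqnorm w).
Proof.
case: z w => [a b] [c e]; rewrite /csqnorm /=.
have := sqr_ge0 (a - c); have := sqr_ge0 (b - e); nra.
Qed.

Lemma csqnorm_realC (r : R) : csqnorm r%:C = r ^+ 2.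
Proof. by rewrite /csqnorm /= expr0n addr0. Qed.

Lemma mul_complexE (a b c e : R) :
  Complex a b * Complex c e = Complex (a * c - b * e) (a * e + b * c).
Proof. by []. Qed.

Lemma realC_mul (r p q : R) : r%:C * Complex p q = Complex (r * p) (r * q).
Proof. by rewrite mul_complexE !mul0r subr0 addr0. Qed.

End ComplexSqnorm.

Section Fourier.
Variables (R : realType) (X : R) (n : nat).
Hypothesis X_gt0 : 0 < X.
Local Notation mu := (@lebesgue_measure R).
Local Notation D := (`[0, X]%classic : set R).
Local Notation L2 := (sq_integrable mu D).
Local Open Scope complex_scope.

Let mD : measurable (D : set (measurableTypeR R)) := measurable_itv _.

Lemma lebesgue_measure_itv0 : mu D = X%:E.
Proof. by rewrite lebesgue_measure_itv /= lte_fin X_gt0 -EFinB subr0. Qed.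

Let finD : (mu D < +oo)%E := ltac:(by rewrite lebesgue_measure_itv0 ltry).

Lemma Rintegral_itv0_derive (f F : R -> R) :
  (forall x : R, is_derive x (1 : R) F (f x)) -> continuous f ->
  \int[mu]_(x in D) f x = F X - F 0.
Proof.
move=> F_f cf; have cF := is_derive_continuous F_f.
rewrite /Rintegral (@continuous_FTC2 _ f F 0 X X_gt0) //.
- exact: continuous_subspaceT.
- split; first by move=> x _; exact: ex_derive.
  + exact: cvg_at_right_filter (cF 0).
  + exact: cvg_at_left_filter (cF X).
- by move=> x _; rewrite derive1E; exact: derive_val.
Qed.

Lemma Rintegral_cosM (t : R) : t != 0 ->
  \int[mu]_(x in D) cos (t * x) = t^-1 * sin (t * X).
Proof.
move=> t_neq0.
have F_f x : is_derive x (1 : R) (fun y => t^-1 * sin (t * y)) (cos (t * x)).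
  have -> : cos (t * x) = t^-1 *: (cos (t * x) * t) by rewrite /GRing.scale /=; field.
  exact: is_deriveZ (is_derive_sinM t x).
rewrite (Rintegral_itv0_derive F_f (is_derive_continuous (is_derive_cosM t))).
by rewrite mulr0 sin0 mulr0 subr0.
Qed.

Lemma Rintegral_sinM (t : R) : t != 0 ->
  \int[mu]_(x in D) sin (t * x) = t^-1 * (1 - cos (t * X)).
Proof.
move=> t_neq0.
have F_f x : is_derive x (1 : R) (fun y => - t^-1 * cos (t * y)) (sin (t * x)).
  have -> : sin (t * x) = (- t^-1) *: (- sin (t * x) * t) by rewrite /GRing.scale /=; field.
  exact: is_deriveZ (is_derive_cosM t x).
rewrite (Rintegral_itv0_derive F_f (is_derive_continuous (is_derive_sinM t))).
by rewrite mulr0 cos0 mulr1; ring.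
Qed.

Lemma freq0 : freq X 0 = 0.
Proof. by rewrite /freq mulr0 mul0r. Qed.

Lemma freq_eq0 (k : int) : (freq X k == 0) = (k == 0).
Proof.
rewrite /freq !mulf_eq0 invr_eq0 intr_eq0 pnatr_eq0 (gt_eqF X_gt0) (gt_eqF (pi_gt0 _)).
by rewrite /= orbF.
Qed.

Lemma freqB (j k : int) : freq X (j - k) = freq X j - freq X k.
Proof. by rewrite /freq rmorphB /=; ring. Qed.

Lemma freqXE (k : int) : freq X k * X = 2 * pi * k%:~R.
Proof. by rewrite /freq mulfVK // gt_eqF. Qed.

Lemma sq_integrable_cosM (t : R) : L2 (fun x => cos (t * x)).
Proof.
apply: (@sq_integrable_bounded _ _ _ mu D mD finD _ 1) => [|x _]; last exact: cos_max.
have -> : (fun x => cos (t * x)) = cos \o *%R t by [].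
apply: measurableT_comp; last exact: measurable_realfun.mulrl_measurable.
exact: measurable_realfun.continuous_measurable_fun (@continuous_cos R).
Qed.

Lemma sq_integrable_sinM (t : R) : L2 (fun x => sin (t * x)).
Proof.
apply: (@sq_integrable_bounded _ _ _ mu D mD finD _ 1) => [|x _]; last exact: sin_max.
have -> : (fun x => sin (t * x)) = sin \o *%R t by [].
apply: measurableT_comp; last exact: measurable_realfun.mulrl_measurable.
exact: measurable_realfun.continuous_measurable_fun (@continuous_sin R).
Qed.

Lemma integrable_cosM (t : R) : mu.-integrable D (EFin \o (fun x => cos (t * x))).
Proof. exact: (sq_integrable_integrable (mu := mu) mD finD (sq_integrable_cosM t)). Qed.

Lemma integrable_sinM (t : R) : mu.-integrable D (EFin \o (fun x => sin (t * x))).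
Proof. exact: (sq_integrable_integrable (mu := mu) mD finD (sq_integrable_sinM t)). Qed.

Lemma integrable_mul_cosM (f : R -> R) (t : R) :
  L2 f -> mu.-integrable D (EFin \o (fun x => f x * cos (t * x))).
Proof. by move=> Lf; apply: (sq_integrable_mul_integrable mD) Lf (sq_integrable_cosM t). Qed.

Lemma integrable_mul_sinM (f : R -> R) (t : R) :
  L2 f -> mu.-integrable D (EFin \o (fun x => f x * sin (t * x))).
Proof. by move=> Lf; apply: (sq_integrable_mul_integrable mD) Lf (sq_integrable_sinM t). Qed.

Lemma Rintegral_cos_freq (k : int) :
  \int[mu]_(x in D) cos (freq X k * x) = if k == 0 then X else 0.
Proof.
have [->|k_neq0] := eqVneq k 0.
  under eq_Rintegral do rewrite freq0 mul0r cos0.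
  rewrite (Rintegral_cst mu mD).
  have := @lebesgue_measure_itv R `[0, X]; rewrite /= lte_fin X_gt0 -EFinB subr0 => ->.
  by rewrite mul1r.
by rewrite Rintegral_cosM ?freq_eq0 // freqXE (sin_cos_2pi_int k).1 mulr0.
Qed.

Lemma Rintegral_sin_freq (k : int) : \int[mu]_(x in D) sin (freq X k * x) = 0.
Proof.
have [->|k_neq0] := eqVneq k 0.
  under eq_Rintegral do rewrite freq0 mul0r sin0.
  by rewrite (Rintegral_cst mu mD) mul0r.
by rewrite Rintegral_sinM ?freq_eq0 // freqXE (sin_cos_2pi_int k).2 subrr mulr0.
Qed.

(* Real and imaginary parts of [\sum_(j <- r) (P j + i Q j) e^(i freq j x)]. *)
Definition trigpoly_re (P Q : int -> R) (r : seq int) (x : R) : R :=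
  \sum_(j <- r) (P j * cos (freq X j * x) - Q j * sin (freq X j * x)).

Definition trigpoly_im (P Q : int -> R) (r : seq int) (x : R) : R :=
  \sum_(j <- r) (P j * sin (freq X j * x) + Q j * cos (freq X j * x)).

(* The [k]-th Fourier coefficient [\int_0^X (a + i b) e^(- i freq k x) dx]. *)
Definition fourier_coef (a b : R -> R) (k : int) : R[i] :=
  Complex (\int[mu]_(x in D) (a x * cos (freq X k * x) + b x * sin (freq X k * x)))
          (\int[mu]_(x in D) (b x * cos (freq X k * x) - a x * sin (freq X k * x))).

Lemma sq_integrable_trigpoly_re (P Q : int -> R) (r : seq int) :
  L2 (trigpoly_re P Q r).
Proof.
apply: (sq_integrable_sum mD finD) => j.
apply: (sq_integrableD mD).
  exact: (sq_integrableZl mD) (sq_integrable_cosM _).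
have -> : (fun x => - (Q j * sin (freq X j * x))) = fun x => - Q j * sin (freq X j * x).
  by apply/funext => x; rewrite mulNr.
exact: (sq_integrableZl mD) (sq_integrable_sinM _).
Qed.

Lemma sq_integrable_trigpoly_im (P Q : int -> R) (r : seq int) :
  L2 (trigpoly_im P Q r).
Proof.
apply: (sq_integrable_sum mD finD) => j.
by apply: (sq_integrableD mD); apply: (sq_integrableZl mD);
  [exact: sq_integrable_sinM | exact: sq_integrable_cosM].
Qed.

Lemma Rintegral_trigpoly_sqnorm (P Q : int -> R) (r : seq int) : uniq r ->
  \int[mu]_(x in D) (trigpoly_re P Q r x ^+ 2 + trigpoly_im P Q r x ^+ 2) =
  X * \sum_(j <- r) (P j ^+ 2 + Q j ^+ 2).
Proof.
move=> r_uniq.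
pose term j k x := (P j * P k + Q j * Q k) * cos (freq X (j - k) * x) +
                   (P j * Q k - Q j * P k) * sin (freq X (j - k) * x).
have expand x : trigpoly_re P Q r x ^+ 2 + trigpoly_im P Q r x ^+ 2 =
    \sum_(j <- r) \sum_(k <- r) term j k x.
  rewrite /trigpoly_re /trigpoly_im !expr2 !big_distrlr /= -big_split /=.
  apply: eq_bigr => j _; rewrite -big_split /=; apply: eq_bigr => k _.
  rewrite /term freqB.
  have -> : (freq X j - freq X k) * x = freq X j * x - freq X k * x by ring.
  by rewrite cosB sinB; ring.
have term_int j k : mu.-integrable D (EFin \o term j k).
  exact: (integrableD_real mD) (integrableZl_real mD _ (integrable_cosM _))
                                (integrableZl_real mD _ (integrable_sinM _)).
have Rintegral_term j k :
    \int[mu]_(x in D) term j k x = if k == j then X * (P j ^+ 2 + Q j ^+ 2) else 0.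
  rewrite (RintegralD mD (integrableZl_real mD _ (integrable_cosM _))
                         (integrableZl_real mD _ (integrable_sinM _))).
  rewrite (RintegralZl _ mD (integrable_cosM _)) (RintegralZl _ mD (integrable_sinM _)).
  rewrite Rintegral_cos_freq Rintegral_sin_freq mulr0 addr0 subr_eq0 eq_sym.
  by case: eqP => [->|_]; [ring | rewrite mulr0].
under eq_Rintegral do rewrite expand.
rewrite (Rintegral_sum mD) => [|j]; last exact: (integrable_sum_real mD).
rewrite big_distrr /=; apply: eq_big_seq => j j_r.
rewrite (Rintegral_sum mD) //; under eq_bigr do rewrite Rintegral_term.
rewrite (bigD1_seq j) //= eqxx big1_seq ?addr0 //.
by move=> k /andP[k_neq_j _]; rewrite (negbTE k_neq_j).
Qed.

Lemma Rintegral_mul_trigpoly (a b : R -> R) (P Q : int -> R) (r : seq int) :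
  L2 a -> L2 b ->
  \int[mu]_(x in D) (a x * trigpoly_re P Q r x + b x * trigpoly_im P Q r x) =
  \sum_(j <- r) (P j * complex.Re (fourier_coef a b j) +
                 Q j * complex.Im (fourier_coef a b j)).
Proof.
move=> La Lb.
have int_re j : mu.-integrable D
    (EFin \o (fun x => a x * cos (freq X j * x) + b x * sin (freq X j * x))).
  exact: (integrableD_real mD) (integrable_mul_cosM _ La) (integrable_mul_sinM _ Lb).
have int_im j : mu.-integrable D
    (EFin \o (fun x => b x * cos (freq X j * x) - a x * sin (freq X j * x))).
  exact: (integrableB_real mD) (integrable_mul_cosM _ Lb) (integrable_mul_sinM _ La).
have expand x : a x * trigpoly_re P Q r x + b x * trigpoly_im P Q r x =
    \sum_(j <- r) (P j * (a x * cos (freq X j * x) + b x * sin (freq X j * x)) +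
                   Q j * (b x * cos (freq X j * x) - a x * sin (freq X j * x))).
  rewrite /trigpoly_re /trigpoly_im !mulr_sumr -big_split /=.
  by apply: eq_bigr => j _; ring.
under eq_Rintegral do rewrite expand.
rewrite (Rintegral_sum mD) => [|j]; last first.
  by apply: (integrableD_real mD); apply: (integrableZl_real mD).
apply: eq_bigr => j _.
rewrite (RintegralD mD (integrableZl_real mD _ (int_re j)) (integrableZl_real mD _ (int_im j))).
by rewrite (RintegralZl _ mD (int_re j)) (RintegralZl _ mD (int_im j)).
Qed.

Lemma bessel_fourier (a b : R -> R) (r : seq int) : L2 a -> L2 b -> uniq r ->
  \sum_(j <- r) csqnorm (fourier_coef a b j) <=
  X * \int[mu]_(x in D) (a x ^+ 2 + b x ^+ 2).
Proof.
move=> La Lb r_uniq.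
pose P j := complex.Re (fourier_coef a b j); pose Q j := complex.Im (fourier_coef a b j).
pose gr := trigpoly_re P Q r; pose gi := trigpoly_im P Q r.
have Lgr : L2 gr := sq_integrable_trigpoly_re P Q r.
have Lgi : L2 gi := sq_integrable_trigpoly_im P Q r.
set S := \sum_(j <- r) _; set I := \int[mu]_(x in D) _.
have cross : \int[mu]_(x in D) (a x * gr x + b x * gi x) = S.
  by rewrite Rintegral_mul_trigpoly //; apply: eq_bigr => j _; rewrite /csqnorm !expr2.
have parseval : \int[mu]_(x in D) (gr x ^+ 2 + gi x ^+ 2) = X * S.
  by rewrite Rintegral_trigpoly_sqnorm.
have int_sq : mu.-integrable D (EFin \o (fun x => a x ^+ 2 + b x ^+ 2)).
  exact: (integrableD_real mD) La.2 Lb.2.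
have int_cross : mu.-integrable D (EFin \o (fun x => a x * gr x + b x * gi x)).
  by apply: (integrableD_real mD); apply: (sq_integrable_mul_integrable mD).
have int_gsq : mu.-integrable D (EFin \o (fun x => gr x ^+ 2 + gi x ^+ 2)).
  exact: (integrableD_real mD) Lgr.2 Lgi.2.
(* Bessel's inequality is the nonnegativity of [\int |X (a + i b) - (gr + i gi)|^2]. *)
have : 0 <= \int[mu]_(x in D) ((X * a x - gr x) ^+ 2 + (X * b x - gi x) ^+ 2).
  by apply: Rintegral_ge0 => x _; rewrite addr_ge0 ?sqr_ge0.
have expand x : (X * a x - gr x) ^+ 2 + (X * b x - gi x) ^+ 2 =
    (X ^+ 2 * (a x ^+ 2 + b x ^+ 2) + - (2 * X) * (a x * gr x + b x * gi x)) +
    (gr x ^+ 2 + gi x ^+ 2) by ring.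
under eq_Rintegral do rewrite expand.
rewrite (RintegralD mD _ int_gsq); last first.
  by apply: (integrableD_real mD); apply: (integrableZl_real mD).
rewrite (RintegralD mD (integrableZl_real mD _ int_sq) (integrableZl_real mD _ int_cross)).
rewrite (RintegralZl _ mD int_sq) (RintegralZl _ mD int_cross) cross parseval -/I => ineq.
by rewrite -(ler_pM2l X_gt0); nra.
Qed.

Definition fourier_entry (M : R -> 'M[R[i]]_n) (l i : 'I_n) : int -> R[i] :=
  fourier_coef (fun x => complex.Re (M x l i)) (fun x => complex.Im (M x l i)).

Lemma L2_on_sq_integrable (z : R -> R[i]) : L2_on X z ->
  L2 (fun x => complex.Re (z x)) /\ L2 (fun x => complex.Im (z x)).
Proof.
move=> [mre [mim z_int]]; split; split => //; apply: (le_integrable mD _ _ z_int);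
  try exact/measurable_realfun.measurable_EFinP/measurable_realfun.measurable_funM.
- move=> x _ /=; rewrite /csqnorm lee_fin !ger0_norm ?addr_ge0 ?sqr_ge0 //.
  by rewrite lerDl sqr_ge0.
- move=> x _ /=; rewrite /csqnorm lee_fin !ger0_norm ?addr_ge0 ?sqr_ge0 //.
  by rewrite lerDr sqr_ge0.
Qed.

Lemma sq_integrable_addr (a : R -> R[i]) (c : R[i]) :
  L2 (fun x => complex.Re (a x)) -> L2 (fun x => complex.Im (a x)) ->
  L2 (fun x => complex.Re (a x + c)) /\ L2 (fun x => complex.Im (a x + c)).
Proof.
move=> La Lb; split.
- have -> : (fun x => complex.Re (a x + c)) = fun x => complex.Re (a x) + complex.Re c.
    by apply/funext => x; case: (a x); case: c.
  exact: (sq_integrableD mD) La (sq_integrable_cst mD finD _).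
- have -> : (fun x => complex.Im (a x + c)) = fun x => complex.Im (a x) + complex.Im c.
    by apply/funext => x; case: (a x); case: c.
  exact: (sq_integrableD mD) Lb (sq_integrable_cst mD finD _).
Qed.

Lemma fmode_integrand (M : 'M[R[i]]_n) (x : R) (k m : int) (i l : 'I_n) :
  \sum_(j < n) (M *m fmode X k i x) j ord0 * conjc (fmode X m l x j ord0) =
  Complex (X^-1 * (complex.Re (M l i) * cos (freq X (m - k) * x) +
                   complex.Im (M l i) * sin (freq X (m - k) * x)))
          (X^-1 * (complex.Im (M l i) * cos (freq X (m - k) * x) -
                   complex.Re (M l i) * sin (freq X (m - k) * x))).
Proof.
rewrite (bigD1 l) //= big1 ?addr0; last first.
  by move=> j /negbTE j_neq_l; rewrite [fmode _ _ _ _ _ _]mxE j_neq_l conjc0 mulr0.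
rewrite !mxE eqxx (bigD1 i) //= big1 ?addr0; last first.
  by move=> j /negbTE j_neq_i; rewrite mxE j_neq_i mulr0.
rewrite mxE eqxx.
have freq_x j : 2 * pi * j%:~R * x / X = freq X j * x by rewrite /freq mulrAC.
rewrite !freq_x; case: (M l i) => [p q].
set s := (Num.sqrt X)^-1.
have ss : s * s = X^-1.
  by rewrite -invrM ?unitfE ?sqrtr_eq0 -?ltNge // -expr2 sqr_sqrtr // ltW.
have -> : freq X (m - k) * x = freq X m * x - freq X k * x by rewrite freqB; ring.
rewrite cosB sinB /expi -ss !mul_complexE.
by apply/eqP; rewrite eq_complex /=; apply/andP; split; apply/eqP; ring.
Qed.

Lemma cinner_fmode (M : R -> 'M[R[i]]_n) (k m : int) (i l : 'I_n) :
  L2 (fun x => complex.Re (M x l i)) -> L2 (fun x => complex.Im (M x l i)) ->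
  cinner X (fun x => M x *m fmode X k i x) (fmode X m l) =
  X^-1%:C * fourier_entry M l i (m - k).
Proof.
move=> Lre Lim.
rewrite /fourier_entry /fourier_coef realC_mul /cinner /cint; congr Complex.
- rewrite -(RintegralZl _ mD); last first.
    exact: (integrableD_real mD) (integrable_mul_cosM _ Lre) (integrable_mul_sinM _ Lim).
  by apply: eq_Rintegral => x _; rewrite fmode_integrand.
- rewrite -(RintegralZl _ mD); last first.
    exact: (integrableB_real mD) (integrable_mul_cosM _ Lim) (integrable_mul_sinM _ Lre).
  by apply: eq_Rintegral => x _; rewrite fmode_integrand.
Qed.

End Fourier.

Section Symbols.
Variables (R : realType) (X : R).

Definition weight (k : int) : R := (1 + freq X k ^+ 2)^-1.

Lemma weight_ge0 (k : int) : 0 <= weight k.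
Proof. by rewrite /weight invr_ge0 addr_ge0 ?sqr_ge0. Qed.

Lemma csqnorm_sym1_le (k : int) : csqnorm (sym1 X k) <= weight k.
Proof.
rewrite /csqnorm /sym1 /weight /=.
set f := freq X k; set q := 1 + f ^+ 2.
have q_gt0 : 0 < q by rewrite /q ltr_pwDl ?sqr_ge0.
have -> : - f ^+ 2 - 1 = - q by rewrite /q opprD addrC.
rewrite invrN.
have -> : (0 * - q^-1 - f * 0) ^+ 2 + (0 * 0 + f * - q^-1) ^+ 2 = q^-1 * (f ^+ 2 / q).
  by rewrite !(mul0r, mulr0, subr0, add0r) sqrrN !expr2; field; rewrite gt_eqF.
rewrite -[leRHS]mulr1; apply: ler_wpM2l; first by rewrite invr_ge0 ltW.
by rewrite ler_pdivrMr // mul1r /q lerDr.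
Qed.

Lemma csqnorm_sym0_le (k : int) : csqnorm (sym0 X k) <= weight k.
Proof.
rewrite /csqnorm /sym0 /weight /=.
set f := freq X k; set q := 1 + f ^+ 2.
have q_ge1 : 1 <= q by rewrite /q lerDl sqr_ge0.
have -> : - f ^+ 2 - 1 = - q by rewrite /q opprD addrC.
rewrite invrN expr0n /= addr0 sqrrN expr2.
rewrite -[leRHS]mulr1; apply: ler_wpM2l; first by rewrite invr_ge0 (le_trans ler01).
by rewrite invf_le1 // (lt_le_trans ltr01).
Qed.

End Symbols.

(* The integers [-N, ..., N]; recall that [Negz j] is [- j.+1]. *)
Definition iota_sym (N : nat) : seq int :=
  map Posz (iota 0 N.+1) ++ map Negz (iota 0 N).

Lemma iota_sym_uniq (N : nat) : uniq (iota_sym N).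
Proof.
rewrite /iota_sym cat_uniq; apply/and3P; split.
- by rewrite map_inj_uniq ?iota_uniq // => x y [].
- by apply/hasPn => x /mapP[y _ ->]; apply/mapP => -[z _].
- by rewrite map_inj_uniq ?iota_uniq // => x y [].
Qed.

Lemma mem_iota_sym (N : nat) (k : int) : (`|k| <= N)%N -> k \in iota_sym N.
Proof.
rewrite /iota_sym mem_cat; case: k => j j_le.
  by apply/orP; left; apply: map_f; rewrite mem_iota add0n ltnS; exact: j_le.
by apply/orP; right; apply: (map_f Negz); rewrite mem_iota add0n; exact: j_le.
Qed.

Section WeightSum.
Variables (R : realType) (X : R).
Hypothesis X_gt0 : 0 < X.

Let c : R := (2 * pi / X) ^+ 2.

Lemma weight_Posz (j : nat) : weight X (Posz j) = (1 + c * j%:R ^+ 2)^-1.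
Proof. by rewrite /weight /freq /c; congr (_^-1); ring. Qed.

Lemma weight_Negz (j : nat) : weight X (Negz j) = weight X (Posz j.+1).
Proof. by rewrite /weight /freq NegzE rmorphN /= mulrN mulNr sqrrN. Qed.

(* For [m >= 1], [1 / (1 + c m^2) <= 2 / (c m (m + 1))], which telescopes. *)
Lemma weight_Posz_le (j : nat) :
  weight X (Posz j.+1) <= 2 / (c * j.+1%:R) - 2 / (c * j.+2%:R).
Proof.
have c_gt0 : 0 < c by rewrite exprn_gt0 // divr_gt0 // mulr_gt0 // pi_gt0.
rewrite weight_Posz; set m := j.+1%:R.
have m_ge1 : 1 <= m by rewrite /m ler1n.
have m_gt0 : 0 < m by rewrite (lt_le_trans ltr01).
have -> : j.+2%:R = m + 1 :> R by rewrite /m -natr1.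
have -> : 2 / (c * m) - 2 / (c * (m + 1)) = 2 / (c * m * (m + 1)).
  by field; apply/and3P; split; rewrite gt_eqF //; lra.
rewrite -[(1 + c * m ^+ 2)^-1]div1r ler_pdivrMr; last first.
  by rewrite addr_gt0 // mulr_gt0 // exprn_gt0.
rewrite mulrAC ler_pdivlMr; last by apply: mulr_gt0; [exact: mulr_gt0 | exact: addr_gt0].
have : 0 <= c * m * (m - 1).
  by apply: mulr_ge0; [apply: mulr_ge0; exact: ltW | rewrite subr_ge0].
by rewrite mul1r; lra.
Qed.

Lemma sum_weight_iota_sym (N : nat) :
  \sum_(k <- iota_sym N) weight X k <= 1 + 4 / (2 * pi / X) ^+ 2.
Proof.
have c_gt0 : 0 < c by rewrite exprn_gt0 // divr_gt0 // mulr_gt0 // pi_gt0.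
have tail M : \sum_(0 <= j < M) weight X (Posz j.+1) <= 2 / c.
  suff : \sum_(0 <= j < M) weight X (Posz j.+1) <= 2 / c - 2 / (c * M.+1%:R).
    by move/le_trans; apply; rewrite lerBlDr lerDl divr_ge0 // mulr_ge0 ?ltW.
  elim: M => [|M IHM]; first by rewrite big_geq // mulr1 subrr.
  rewrite big_nat_recr //=; apply: le_trans (lerD IHM (weight_Posz_le M)) _.
  by rewrite addrA subrK.
rewrite /iota_sym big_cat !big_map -[iota 0 N.+1]/(index_iota 0 N.+1) big_nat_recl //.
have -> : iota 0 N = index_iota 0 N by rewrite /index_iota subn0.
under [S in _ + S <= _]eq_bigr do rewrite weight_Negz.
have -> : weight X (Posz 0) = 1 by rewrite weight_Posz mulr0n expr0n /= mulr0 addr0 invr1.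
have -> : 4 / c = 2 / c + 2 / c by field; rewrite gt_eqF.
by rewrite -addrA lerD2l lerD ?tail.
Qed.

End WeightSum.

Lemma ler_sum_uniq_subset (R : numDomainType) (T : eqType) (s t : seq T) (F : T -> R) :
  uniq s -> uniq t -> {subset s <= t} -> (forall x, 0 <= F x) ->
  \sum_(x <- s) F x <= \sum_(x <- t) F x.
Proof.
move=> s_uniq t_uniq s_t F_ge0; rewrite [leRHS](bigID (mem s)) /=.
have -> : \sum_(x <- t | x \in s) F x = \sum_(x <- s) F x.
  rewrite -big_filter; apply: perm_big; apply: uniq_perm => //; first exact: filter_uniq.
  by move=> x; rewrite mem_filter; case x_s: (x \in s) => //=; apply: s_t.
by rewrite lerDl sumr_ge0.
Qed.

Lemma sum_convolution_le (R : numDomainType) (I : zmodType) (w H : I -> R)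
    (r : seq I) (W G : R) :
  uniq r -> (forall m, 0 <= w m) ->
  (forall s, uniq s -> \sum_(d <- s) H d <= G) -> \sum_(m <- r) w m <= W ->
  \sum_(k <- r) \sum_(m <- r) w m * H (m - k) <= W * G.
Proof.
move=> r_uniq w_ge0 H_le w_le.
have G_ge0 : 0 <= G by have := H_le [::] isT; rewrite big_nil.
rewrite exchange_big /=; apply: (@le_trans _ _ (\sum_(m <- r) w m * G)).
  apply: ler_sum => m _; rewrite -mulr_sumr ler_wpM2l //.
  rewrite -(big_map (fun k => m - k) xpredT H); apply: H_le.
  by rewrite map_inj_uniq // => j k /addrI /oppr_inj.
by rewrite -mulr_suml ler_wpM2r.
Qed.

Lemma esum_lty_bounded (T : choiceType) (R : realType) (f : T -> R) (M : R) :
  (forall s : seq T, uniq s -> \sum_(x <- s) f x <= M) ->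
  (\esum_(x in [set: T]) (f x)%:E < +oo)%E.
Proof.
move=> f_le; apply: (@le_lt_trans _ _ M%:E); last exact: ltry.
apply: ge_ereal_sup => _ [A [finA _] <-].
have [s ->] := (finite_seqP A).1 finA.
rewrite (_ : [set` s] = [set` undup s]); last first.
  by apply/seteqP; split => x /=; rewrite mem_undup.
by rewrite -fsbig_seq ?undup_uniq // sumEFin lee_fin f_le ?undup_uniq.
Qed.

Section HilbertSchmidt.
Variables (R : realType) (X : R) (n : nat) (A0 A1 : R -> 'M[R[i]]_n) (lam : R[i]).
Hypothesis X_gt0 : 0 < X.
Hypotheses (A0_L2 : forall l i, L2_on X (fun x => A0 x l i))
           (A1_L2 : forall l i, L2_on X (fun x => A1 x l i)).
Local Notation mu := (@lebesgue_measure R).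
Local Notation D := (`[0, X]%classic : set R).
Local Notation L2 := (sq_integrable mu D).
Local Notation B := (fun x => A0 x + (1 - lam)%:M).
Local Open Scope complex_scope.

Let A1_entry_L2 l i :
    L2 (fun x => complex.Re (A1 x l i)) /\ L2 (fun x => complex.Im (A1 x l i)) :=
  L2_on_sq_integrable (A1_L2 l i).

Lemma B_entry_L2 (l i : 'I_n) :
  L2 (fun x => complex.Re (B x l i)) /\ L2 (fun x => complex.Im (B x l i)).
Proof.
have [Lre Lim] := L2_on_sq_integrable (A0_L2 l i).
have eRe : (fun x => complex.Re (B x l i)) =
           fun x => complex.Re (A0 x l i + (1 - lam)%:M l i).
  by apply/funext => x; rewrite /= !mxE.
have eIm : (fun x => complex.Im (B x l i)) =
           fun x => complex.Im (A0 x l i + (1 - lam)%:M l i).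
  by apply/funext => x; rewrite /= !mxE.
by rewrite eRe eIm; exact: sq_integrable_addr.
Qed.

Definition coef_energy (l i : 'I_n) (d : int) : R :=
  csqnorm (fourier_entry X A1 l i d) + csqnorm (fourier_entry X B l i d).

Definition entry_energy (l i : 'I_n) : R :=
  X * \int[mu]_(x in D) (complex.Re (A1 x l i) ^+ 2 + complex.Im (A1 x l i) ^+ 2) +
  X * \int[mu]_(x in D) (complex.Re (B x l i) ^+ 2 + complex.Im (B x l i) ^+ 2).

Lemma bessel_coef_energy (l i : 'I_n) (s : seq int) :
  uniq s -> \sum_(d <- s) coef_energy l i d <= entry_energy l i.
Proof.
move=> s_uniq; rewrite big_split /=.
have [L1re L1im] := A1_entry_L2 l i; have [L0re L0im] := B_entry_L2 l i.
by apply: lerD; apply: bessel_fourier.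
Qed.

Lemma Kcoef_fmode_le (k m : int) (i l : 'I_n) :
  csqnorm (Kcoef X lam A0 A1 (fmode X k i) m l) <=
  2 * X^-1 ^+ 2 * weight X m * coef_energy l i (m - k).
Proof.
have [L1re L1im] := A1_entry_L2 l i; have [L0re L0im] := B_entry_L2 l i.
rewrite /Kcoef (cinner_fmode X_gt0 k m L1re L1im) (cinner_fmode X_gt0 k m L0re L0im).
have scaled_le (s z : R[i]) : csqnorm s <= weight X m ->
    csqnorm (s * ((X^-1)%:C * z)) <= weight X m * (X^-1 ^+ 2 * csqnorm z).
  move=> s_le; rewrite !csqnormM csqnorm_realC ler_wpM2r //.
  by rewrite mulr_ge0 ?sqr_ge0 ?csqnorm_ge0.
apply: le_trans (csqnormD_le _ _) _.
have := scaled_le _ (fourier_entry X A1 l i (m - k)) (csqnorm_sym1_le X m).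
have := scaled_le _ (fourier_entry X B l i (m - k)) (csqnorm_sym0_le X m).
rewrite /coef_energy; lra.
Qed.

Let HS_const : R := 2 * X^-1 ^+ 2 * (1 + 4 / (2 * pi / X) ^+ 2).

Lemma HS_box_sum_le (N : nat) :
  \sum_(k <- iota_sym N) \sum_(i <- enum 'I_n) \sum_(m <- iota_sym N) \sum_(l <- enum 'I_n)
    csqnorm (Kcoef X lam A0 A1 (fmode X k i) m l) <=
  \sum_(i <- enum 'I_n) \sum_(l <- enum 'I_n) HS_const * entry_energy l i.
Proof.
apply: (@le_trans _ _ (\sum_(k <- iota_sym N) \sum_(i <- enum 'I_n)
  \sum_(m <- iota_sym N) \sum_(l <- enum 'I_n)
     (2 * X^-1 ^+ 2 * weight X m * coef_energy l i (m - k)))).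
  by do 4!(apply: ler_sum => ? _); exact: Kcoef_fmode_le.
rewrite exchange_big; apply: ler_sum => i _.
under eq_bigr do rewrite exchange_big.
rewrite exchange_big; apply: ler_sum => l _.
have c_ge0 : 0 <= 2 * X^-1 ^+ 2 by rewrite mulr_ge0 ?sqr_ge0.
apply: (sum_convolution_le (w := fun m => 2 * X^-1 ^+ 2 * weight X m)).
- exact: iota_sym_uniq.
- by move=> m; rewrite mulr_ge0 ?weight_ge0.
- exact: bessel_coef_energy.
- by rewrite -mulr_sumr ler_wpM2l ?sum_weight_iota_sym.
Qed.

Lemma HS_partial_sum_le (t : seq ((int * 'I_n) * (int * 'I_n))) : uniq t ->
  \sum_(p <- t) csqnorm (Kcoef X lam A0 A1 (fmode X p.1.1 p.1.2) p.2.1 p.2.2) <=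
  \sum_(i <- enum 'I_n) \sum_(l <- enum 'I_n) HS_const * entry_energy l i.
Proof.
move=> t_uniq.
set N := \max_(p <- t) maxn `|p.1.1| `|p.2.1|.
set modes := [seq (k, i) | k <- iota_sym N, i <- enum 'I_n].
have modes_uniq : uniq modes.
  apply: allpairs_uniq; [exact: iota_sym_uniq | exact: enum_uniq |].
  by move=> [? ?] [? ?] _ _ /= [-> ->].
have box_uniq : uniq [seq (p, q) | p <- modes, q <- modes].
  by apply: allpairs_uniq => // [[? ?] [? ?] _ _ /= [-> ->]].
have t_box : {subset t <= [seq (p, q) | p <- modes, q <- modes]}.
  move=> [[k i] [m l]] p_t.
  have := leq_bigmax_seq (P := xpredT)
    (F := fun p : (int * 'I_n) * (int * 'I_n) => maxn `|p.1.1| `|p.2.1|) _ p_t isT.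
  rewrite -/N geq_max => /andP[k_N m_N].
  by apply: allpairs_f; apply: allpairs_f; rewrite ?mem_enum // mem_iota_sym.
apply: le_trans (ler_sum_uniq_subset t_uniq box_uniq t_box (fun p => csqnorm_ge0 _)) _.
rewrite !big_allpairs; under eq_bigr => k _ do under eq_bigr => i _ do rewrite big_allpairs.
exact: HS_box_sum_le.
Qed.

End HilbertSchmidt.

Theorem lemma3p1 (R : realType) (X : R) (n : nat) (A0 A1 : R -> 'M[R[i]]_n)
    (lam : R[i]) :
  0 < X -> (1 <= n)%N -> L2per_mx X A0 -> L2per_mx X A1 ->
  K_hilbert_schmidt X lam A0 A1.
Proof.
move=> X_gt0 _ [_ A0_L2] [_ A1_L2].
apply: esum_lty_bounded => t t_uniq.
exact: HS_partial_sum_le.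
Qed.
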